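(* Let $m$ be a stack $\mathbb T$-automaton over a finite stack alphabet $\Gamma$ and finite input alphabet $A$, with finite state set $X$. Then for every $x_0\in X$ and $\gamma_0\in\Gamma$ the language $\{w\in A^*\mid \llbracket x_0\rrbracket_m(w)(\gamma_0)=1\}$ is a real-time deterministic context-free language. Conversely, for every real-time deterministic context-free language $\mathcal L\subseteq A^*$ there exist a stack $\mathbb T$-automaton $m$ (over some finite $\Gamma$), a state $x_0$ and a symbol $\gamma_0\in\Gamma$ such that $\mathcal L=\{w\in A^*\mid \llbracket x_0\rrbracket_m(w)(\gamma_0)=1\}$.
   Context: The stack monad over $\Gamma$: $TX$ is the set of maps $p=\langle r,t\rangle:\Gamma^*\to X\times\Gamma^*$ for which there is $k$ such that $r(wu)=r(w)$ and $t(wu)=t(w)u$ for all $w\in\Gamma^k$, $u\in\Gamma^*$; unit $\eta(x)(s)=(x,s)$; Kleisli extension $f^\dagger(p)(s)=f(r(s))(t(s))$. A stack $\mathbb T$-automaton consists of a finite set $X$ and maps $o^m:X\to B$, $t^m:A\times X\to TX$, where $B$ is the set of predicates $p\in 2^{\Gamma^*}$ for which there is $k$ with $p(wu)=p(w)$ whenever $|w|\ge k$, with the $\mathbb T$-algebra structure $a^m:TB\to B$, $a^m(\langle r,t\rangle)(s)=r(s)(t(s))$. Its trace semantics $\llbracket x\rrbracket_m:A^*\to B$ is given by the generalized powerset construction: equip $B\times(TX)^A$ with the componentwise $\mathbb T$-algebra structure, let $m^\sharp:TX\to B\times(TX)^A$ be the unique $\mathbb T$-algebra morphism with $m^\sharp(\eta(x))=(o^m(x),\lambda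 a.t^m(a,x))$, and let $\llbracket x\rrbracket_m(w)=o(\partial_w(\eta(x)))$ in this coalgebra ($\partial_\epsilon=\mathrm{id}$, $\partial_{aw}=\partial_w\circ\partial_a$). Equivalently $\llbracket x\rrbracket_m(\epsilon)=o^m(x)$ and $\llbracket x\rrbracket_m(au)(s)=\llbracket y\rrbracket_m(u)(s')$ where $(y,s')=t^m(a,x)(s)$. A real-time deterministic context-free language is a language accepted (by final state) by a deterministic pushdown automaton without $\epsilon$-transitions, i.e. one with transition function $\delta:Q\times A\times\Delta\to (Q\times\Delta^* )\cup\{\bot\}$ (finite $Q,\Delta$), an initial state, an initial stack symbol and a set of final states. *)

From mathcomp Require Import all_boot.
Set Implicit Arguments. Unset Strict Implicit. Unset Printing Implicit Defensive.

(* Stacks are words over Gamma, top of stack = head of the list. *)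

Definition is_stack_map (G : Type) (X : Type) (p : seq G -> X * seq G) : Prop :=
  exists k : nat, forall w u : seq G, size w = k ->
    p (w ++ u) = ((p w).1, (p w).2 ++ u).

Definition stackT (G : Type) (X : Type) := { p : seq G -> X * seq G | is_stack_map p }.

Definition is_stack_pred (G : Type) (p : seq G -> bool) : Prop :=
  exists k : nat, forall w u : seq G, k <= size w -> p (w ++ u) = p w.

Definition stackB (G : Type) := { p : seq G -> bool | is_stack_pred p }.

Record stack_aut (A G X : finType) := StackAut {
  out : X -> stackB G;
  trans : A -> X -> stackT G X
}.

(* Trace semantics [[x]]_m : A^* -> B (the underlying predicate), via the
   equivalent recursive characterization. *)
Fixpoint stack_sem (A G X : finType) (m : stack_aut A G X) (x : X) (w : seq A)
  : seq G -> bool :=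
  match w with
  | [::] => sval (out m x)
  | a :: u => fun s => let ys := sval (trans m a x) s in stack_sem m ys.1 u ys.2
  end.

Record rt_dpda (A Q D : finType) := RtDpda {
  delta : Q -> A -> D -> option (Q * seq D);
  q_init : Q;
  z_init : D;
  final : Q -> bool
}.

Fixpoint dpda_run (A Q D : finType) (P : rt_dpda A Q D) (q : Q) (s : seq D)
  (w : seq A) : option (Q * seq D) :=
  match w with
  | [::] => Some (q, s)
  | a :: u =>
      match s with
      | [::] => None
      | z :: s' =>
          match delta P q a z with
          | None => None
          | Some (q', g) => dpda_run P q' (g ++ s') u
          end
      end
  end.

Definition dpda_accepts (A Q D : finType) (P : rt_dpda A Q D) (w : seq A) : bool :=
  match dpda_run P (q_init P) [:: z_init P] w with
  | Some (q, _) => final P q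
  | None => false
  end.

Definition rt_dcfl (A : finType) (L : seq A -> Prop) : Prop :=
  exists (Q D : finType) (P : rt_dpda A Q D), forall w, L w <-> dpda_accepts P w.

From mathcomp Require Import all_boot zify.
Set Implicit Arguments. Unset Strict Implicit. Unset Printing Implicit Defensive.

(* Every transition map of [m] and every output
   predicate only looks at a bounded number of top stack symbols; as there
   are finitely many of them, one bound [N] works for all ([uniform_bound]).
   The DPDA keeps the top of the stack of [m] in its finite control as a
   buffer of fewer than [2N] symbols, and stores the rest as stack symbols
   that are blocks of exactly [N] symbols, above a bottom marker [None].  On
   each letter it merges the buffer with the top block, applies the
   transition of [m] (legitimate since at least [N] symbols are visible),
   and cuts the result again into a buffer and blocks ([splitP]).

   DPDA to stack automaton.  A DPDA step only reads the top symbol, so it is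
   a stack map; blocking is sent to a rejecting sink state ([dpda_aut_sem]). *)

Section TopBounded.
Variable G : Type.

Definition stack_map_from (X : Type) (N : nat) (p : seq G -> X * seq G) : Prop :=
  forall w u : seq G, N <= size w -> p (w ++ u) = ((p w).1, (p w).2 ++ u).

Definition stack_pred_from (N : nat) (p : seq G -> bool) : Prop :=
  forall w u : seq G, N <= size w -> p (w ++ u) = p w.

Lemma stack_map_fromW (X : Type) (N N' : nat) (p : seq G -> X * seq G) :
  N <= N' -> stack_map_from N p -> stack_map_from N' p.
Proof. by move=> leNN' pN w u leN'w; apply: pN; apply: leq_trans leN'w. Qed.

Lemma stack_pred_fromW (N N' : nat) (p : seq G -> bool) :
  N <= N' -> stack_pred_from N p -> stack_pred_from N' p.
Proof. by move=> leNN' pN w u leN'w; apply: pN; apply: leq_trans leN'w. Qed.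

Lemma is_stack_map_from (X : Type) (p : seq G -> X * seq G) :
  is_stack_map p -> exists N, stack_map_from N p.
Proof.
move=> [k pk]; exists k => w u lekw.
have size_top : size (take k w) = k by rewrite size_takel.
by rewrite -(cat_take_drop k w) -catA !pk //= catA.
Qed.

Lemma stack_map_from_size (X : Type) (N : nat) (p : seq G -> X * seq G) (w : seq G) :
  stack_map_from N p -> N <= size w -> size w - N <= size (p w).2.
Proof.
move=> pN leNw; rewrite -[in p w](cat_take_drop N w) pN ?size_takel //=.
by rewrite size_cat size_drop leq_addl.
Qed.

End TopBounded.

Lemma uniform_bound (I : finType) (P : I -> nat -> Prop) :
  (forall i k k', k <= k' -> P i k -> P i k') -> (forall i, exists k, P i k) ->
  exists K, forall i, P i K.
Proof.
move=> P_mono P_ev.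
suff [K PK] : exists K, forall i, i \in enum I -> P i K.
  by exists K => i; apply: PK; rewrite mem_enum.
elim: (enum I) => [|i s [K PK]]; first by exists 0.
have [k Pik] := P_ev i; exists (maxn k K) => j; rewrite in_cons => /predU1P [-> | js].
- exact: P_mono (leq_maxl k K) Pik.
- exact: P_mono (leq_maxr k K) (PK j js).
Qed.

Section Blocks.
Variables (G : Type) (N : nat).

(* A configuration of the simulating DPDA: a buffer [b] on top of full blocks
   [cs]; the buffer is shorter than [2N], and holds at least [N] symbols as
   soon as there are blocks below it (so that it determines the behaviour of
   a stack automaton that only looks [N] symbols deep). *)
Definition wf_config (b : seq G) (cs : seq (seq G)) : bool :=
  [&& size b < 2 * N, all (fun c => size c == N) cs & ~~ nilp cs ==> (N <= size b)].

(* Cut a stack [r] into a top buffer and as many full blocks of size [N] as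
   possible while keeping at least [N] symbols in the buffer. *)
Definition block_count (r : seq G) : nat := (size r - N) %/ N.

Definition split_buffer (r : seq G) : seq G :=
  take (size r - block_count r * N) r.

Definition split_blocks (r : seq G) : seq (seq G) :=
  reshape (nseq (block_count r) N) (drop (size r - block_count r * N) r).

Lemma splitP (r : seq G) : 0 < N ->
  [/\ split_buffer r ++ flatten (split_blocks r) = r,
      wf_config (split_buffer r) (split_blocks r)
    & N <= size r -> N <= size (split_buffer r)].
Proof.
move=> N_gt0; rewrite /split_buffer /split_blocks /wf_config.
have := divn_eq (size r - N) N; have := ltn_pmod (size r - N) N_gt0.
rewrite -/(block_count r); set n := block_count r; set k := size r - n * N => ltr eqr.
have size_b : size (take k r) = k by rewrite size_takel /k; lia.
have size_rest : size (drop k r) = sumn (nseq n N) by rewrite size_drop sumn_nseq /k; lia.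
rewrite reshapeKr ?size_rest // cat_take_drop size_b; split=> //; last by lia.
apply/and3P; split.
- by rewrite /k; case: (leqP N (size r)) => ?; lia.
- rewrite -(all_map size (pred1 N)) -/(shape _) reshapeKl ?size_rest //.
  by rewrite all_nseq /= eqxx orbT.
- rewrite /nilp size_reshape size_nseq; apply/implyP => n_gt0; rewrite /k; nia.
Qed.
End Blocks.

Arguments split_buffer {G} N r : simpl never.
Arguments split_blocks {G} N r : simpl never.

Definition accepts_from (A Q D : finType) (P : rt_dpda A Q D) (q : Q) (s : seq D)
  (w : seq A) : bool :=
  if dpda_run P q s w is Some (q', _) then final P q' else false.

Lemma insub_bseqK (n : nat) (T : Type) (s : seq T) :
  size s <= n -> val (insub_bseq n s) = s.
Proof. by move=> le_sn; rewrite /insub_bseq insubdK. Qed.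

Section BlockDpda.
Variables (A G X : finType) (m : stack_aut A G X) (N : nat).
Hypothesis N_gt0 : 0 < N.
Hypothesis transN : forall a x, stack_map_from N (sval (trans m a x)).
Hypothesis outN : forall x, stack_pred_from N (sval (out m x)).

Local Notation buffer := ((2 * N).-bseq G).
Local Notation block := (option (N.-bseq G)).

(* Blocks as stack symbols of the DPDA; [None] marks the bottom. *)
Definition encode (cs : seq (seq G)) : seq block :=
  map (fun c => Some (insub_bseq N c)) cs.

Definition block_delta (q : X * buffer) (a : A) (d : block)
  : option ((X * buffer) * seq block) :=
  let top := if d is Some c then val c else [::] in
  let yr := sval (trans m a q.1) (val q.2 ++ top) in
  Some ((yr.1, insub_bseq (2 * N) (split_buffer N yr.2)),
        encode (split_blocks N yr.2) ++ (if d is Some _ then [::] else [:: None])).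

Definition block_dpda (x0 : X) (g0 : G) : rt_dpda A (X * buffer)%type block :=
  RtDpda block_delta (x0, insub_bseq (2 * N) [:: g0]) None
    (fun q => sval (out m q.1) (val q.2)).

Variables (x0 : X) (g0 : G).
Local Notation P := (block_dpda x0 g0).

Lemma block_run_step (x : X) (b : seq G) (cs : seq (seq G)) (a : A) (w : seq A) :
  wf_config N b cs ->
  let yr := sval (trans m a x) (b ++ flatten cs) in
  exists b' cs', [/\ wf_config N b' cs', b' ++ flatten cs' = yr.2 &
    dpda_run P (x, insub_bseq (2 * N) b) (encode cs ++ [:: None]) (a :: w) =
    dpda_run P (yr.1, insub_bseq (2 * N) b') (encode cs' ++ [:: None]) w].
Proof.
case: cs => [|c cs] /and3P [size_b blocks_N top_b] /=;
  rewrite /block_delta (insub_bseqK (ltnW size_b)) /=.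
- rewrite !cats0; set r := (sval _ b).2.
  have [flat_r wf_r _] := splitP r N_gt0.
  by exists (split_buffer N r), (split_blocks N r).
- have /andP [/eqP size_c blocks_cs] : (size c == N) && all (fun c => size c == N) cs.
    exact: blocks_N.
  have /(_ isT) le_Nb := implyP top_b.
  rewrite insub_bseqK ?size_c // cats0.
  have le_Nbc : N <= size (b ++ c) by rewrite size_cat; lia.
  rewrite catA transN //=; set r := (sval _ (b ++ c)).2.
  have le_Nr : N <= size r.
    by have := stack_map_from_size (transN a x) le_Nbc; rewrite -/r size_cat; lia.
  have [flat_r /and3P [size_b' blocks_r _] long_b'] := splitP r N_gt0.
  exists (split_buffer N r), (split_blocks N r ++ cs); split.
  + by rewrite /wf_config size_b' all_cat blocks_r blocks_cs long_b' // implybT.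
  + by rewrite flatten_cat catA flat_r.
  + by rewrite /encode map_cat -catA.
Qed.

Lemma block_dpda_sem (w : seq A) (x : X) (b : seq G) (cs : seq (seq G)) :
  wf_config N b cs ->
  accepts_from P (x, insub_bseq (2 * N) b) (encode cs ++ [:: None]) w =
  stack_sem m x w (b ++ flatten cs).
Proof.
elim: w x b cs => [|a w IH] x b cs wf_bcs.
  case/and3P: wf_bcs => size_b _ /implyP top_b.
  rewrite /accepts_from /= (insub_bseqK (ltnW size_b)).
  by case: cs top_b => [_ | c cs /(_ isT) le_Nb]; rewrite ?cats0 ?outN.
have [b' [cs' [wf' flat' run_eq]]] := block_run_step x a w wf_bcs.
by rewrite /accepts_from run_eq -/(accepts_from P _ _ w) IH // flat'.
Qed.

End BlockDpda.

Lemma stack_aut_rt_dcfl (A G X : finType) (m : stack_aut A G X) (x0 : X) (g0 : G) :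
  rt_dcfl (fun w : seq A => stack_sem m x0 w [:: g0] = true).
Proof.
have [KT transK] : exists K, forall i : A * X, stack_map_from K (sval (trans m i.1 i.2)).
  apply: uniform_bound => [i k k' /stack_map_fromW|i]; first exact.
  exact/is_stack_map_from/(svalP (trans m i.1 i.2)).
have [KO outK] : exists K, forall x : X, stack_pred_from K (sval (out m x)).
  apply: uniform_bound => [x k k' /stack_pred_fromW|x]; first exact.
  exact: (svalP (out m x)).
pose N := maxn 1 (maxn KT KO).
have N_gt0 : 0 < N by rewrite leq_max.
have transN a x : stack_map_from N (sval (trans m a x)).
  by apply: stack_map_fromW (transK (a, x)); rewrite !leq_max leqnn orbT.
have outN x : stack_pred_from N (sval (out m x)).
  by apply: stack_pred_fromW (outK x); rewrite !leq_max leqnn !orbT.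
have wf0 : wf_config N [:: g0] [::] by rewrite /wf_config /= andbT; lia.
exists _, _, (block_dpda m N x0 g0) => w.
by rewrite -(block_dpda_sem N_gt0 transN outN x0 g0 w x0 wf0).
Qed.

Section DpdaAut.
Variables (A Q D : finType) (P : rt_dpda A Q D).

Definition dpda_step (a : A) (x : option Q) (s : seq D) : option Q * seq D :=
  if x is Some q then
    if s is z :: s' then
      if delta P q a z is Some (q', g) then (Some q', g ++ s') else (None, s)
    else (None, [::])
  else (None, s).

Lemma dpda_step_stack_map (a : A) (x : option Q) : is_stack_map (dpda_step a x).
Proof.
case: x => [q|]; last by exists 0.
exists 1 => [[|z [|]]] //= u _.
by case: (delta P q a z) => [[q' g]|] //=; rewrite cats0.
Qed.

Definition dpda_out (x : option Q) : stackB D :=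
  exist _ (fun _ => if x is Some q then final P q else false) (ex_intro _ 0 (fun _ _ _ => erefl)).

Definition dpda_aut : stack_aut A D (option Q) :=
  StackAut dpda_out (fun a x => exist _ _ (dpda_step_stack_map a x)).

Lemma dpda_aut_sink (w : seq A) (s : seq D) : stack_sem dpda_aut None w s = false.
Proof. by elim: w s. Qed.

Lemma dpda_aut_sem (w : seq A) (q : Q) (s : seq D) :
  stack_sem dpda_aut (Some q) w s = accepts_from P q s w.
Proof.
elim: w q s => [|a w IH] q [|z s] //=; rewrite ?dpda_aut_sink //.
by rewrite /accepts_from /=; case: (delta P q a z) => [[q' g]|] /=; rewrite ?IH ?dpda_aut_sink.
Qed.

End DpdaAut.

Lemma rt_dcfl_stack_aut (A : finType) (L : seq A -> Prop) : rt_dcfl L ->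
  exists (G X : finType) (m : stack_aut A G X) (x0 : X) (g0 : G),
    forall w : seq A, L w <-> stack_sem m x0 w [:: g0] = true.
Proof.
move=> [Q [D [P accP]]]; exists D, (option Q), (dpda_aut P), (Some (q_init P)), (z_init P).
by move=> w; rewrite dpda_aut_sem accP.
Qed.

Theorem mainTheorem5 (A : finType) :
  (forall (G X : finType) (m : stack_aut A G X) (x0 : X) (g0 : G),
     rt_dcfl (fun w : seq A => stack_sem m x0 w [:: g0] = true))
  /\
  (forall L : seq A -> Prop, rt_dcfl L ->
     exists (G X : finType) (m : stack_aut A G X) (x0 : X) (g0 : G),
       forall w : seq A, L w <-> stack_sem m x0 w [:: g0] = true).
Proof.
split; [exact: stack_aut_rt_dcfl | exact: rt_dcfl_stack_aut].
Qed.
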